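(* Let $q\in[1,\infty]$, $(d_M)_{M\in\mathbb N}\in\mathbb N^{\mathbb N}$, $(r_M)_{M\in\mathbb N}$ reals with $r_M\ge1$, and let $\Sigma_M=B_{d_M,\|\cdot\|_q}(0,r_M)$ be the set of sequences in $\ell^q(\mathbb N)$ of $\ell^q$-norm at most $r_M$ with all coordinates beyond the first $d_M$ equal to zero. Then $\Sigma=(\Sigma_M)_M$ is either $\infty$-encodable in $\ell^q(\mathbb N)$ or $\gamma$-encodable in $\ell^q(\mathbb N)$ for no $\gamma>0$. Moreover, $\Sigma$ is $\infty$-encodable if and only if $d_M(\log_2(r_M)+1)=O(M^{1+h})$ as $M\to\infty$ for every $h>0$.
   Context: A finite $X\subset A$ is an $\varepsilon$-covering of $A$ (in a metric space) if every point of $A$ is within distance $\varepsilon$ of some point of $X$. For $\gamma,h>0$, a $(\gamma,h)$-encoding of $\Sigma=(\Sigma_M)_M$ is a sequence $(\Sigma(\gamma,h)_M)_M$ such that for some $c_1,c_2>0$ and all $M$, $\Sigma(\gamma,h)_M$ is a $c_1M^{-\gamma}$-covering of $\Sigma_M$ with $\log_2|\Sigma(\gamma,h)_M|\le c_2M^{1+h}$. $\Sigma$ is $\gamma$-encodable if it admits a $(\gamma,h)$-encoding for every $h>0$, and $\infty$-encodable if it is $\gamma$-encodable for every $\gamma>0$. *)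

From HB Require Import structures.
From mathcomp Require Import all_boot all_order all_algebra.
From mathcomp Require Import finmap.
From mathcomp Require Import all_classical all_reals all_analysis.
Set Implicit Arguments. Unset Strict Implicit. Unset Printing Implicit Defensive.
Import Order.TTheory GRing.Theory Num.Theory.
Local Open Scope classical_set_scope.
Local Open Scope ring_scope.

(* Real sequences nat -> R; the l^q norm, q in [1, +oo], valued in \bar R
   (+oo exactly for sequences outside l^q). *)
Definition lq_norm (R : realType) (q : \bar R) (x : nat -> R) : \bar R :=
  match q with
  | EFin p => ereal_sup (range (fun N : nat =>
                 ((\sum_(i < N) `|x i| `^ p) `^ p^-1)%:E))
  | _ => ereal_sup (range (fun i : nat => (`|x i|)%:E))
  end.

Definition lq_dist (R : realType) (q : \bar R) (x y : nat -> R) : \bar R :=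
  lq_norm q (x - y).

Definition ball_fin (R : realType) (q : \bar R) (d : nat) (r : R) : set (nat -> R) :=
  [set x | (lq_norm q x <= r%:E)%E /\ forall i, (d <= i)%N -> x i = 0].

Definition covering (R : realType) (q : \bar R) (A X : set (nat -> R)) (eps : R) :=
  [/\ finite_set X, X `<=` A &
      forall a, A a -> exists2 x, X x & (lq_dist q a x <= eps%:E)%E].

Definition log2 (R : realType) (x : R) : R := ln x / ln 2.

Definition encodable_gh (R : realType) (q : \bar R) (Sigma : nat -> set (nat -> R))
  (gamma h : R) : Prop :=
  exists (c1 c2 : R), 0 < c1 /\ 0 < c2 /\
  exists Enc : nat -> set (nat -> R), forall M : nat, (1 <= M)%N ->
    covering q (Sigma M) (Enc M) (c1 * M%:R `^ (- gamma)) /\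
    log2 (#|` fset_set (Enc M)|%fset)%:R <= c2 * M%:R `^ (1 + h).

Definition gamma_encodable (R : realType) (q : \bar R) (Sigma : nat -> set (nat -> R))
  (gamma : R) : Prop :=
  forall h : R, 0 < h -> encodable_gh q Sigma gamma h.

Definition infty_encodable (R : realType) (q : \bar R) (Sigma : nat -> set (nat -> R)) : Prop :=
  forall gamma : R, 0 < gamma -> gamma_encodable q Sigma gamma.

From HB Require Import structures.
From mathcomp Require Import all_boot all_order all_algebra.
From mathcomp Require Import finmap.
From mathcomp Require Import all_classical all_reals all_analysis.
From mathcomp Require Import ring lra zify.
Import Order.TTheory GRing.Theory Num.Theory.
Local Open Scope ring_scope.

Set Implicit Arguments. Unset Strict Implicit.

(* Let N be the least size of an eps-covering of B = B_{d,q}(0, r), with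
   1 <= r and eps <= 1/80. Counting points of a lattice of mesh of order
   eps / d gives d (log2 r + 1) <= log2 N: dilating by an integer k > 4 r puts
   k^d copies of the lattice points of B(4 eps) into B, while each eps-ball of
   the covering holds at most 2^d times as many as B(4 eps). Rounding to the
   grid of mesh eps / (d + 1) gives log2 N <= d log2 (4 r (d + 1) / eps).
   For eps = c M^-gamma the two bounds differ by d (log2 (d + 1) + gamma log2 M
   + O(1)), which is O(M^(1+h)) for every h > 0 as soon as d (log2 r + 1) is.
   So gamma-encodability for a single gamma > 0 is equivalent to this growth
   condition, which does not depend on gamma. *)

Section PowR.
Variable R : realType.
Implicit Types p a b t : R.

Lemma ge0_powR_le p a b : 0 <= p -> 0 <= a -> a <= b -> a `^ p <= b `^ p.
Proof.
move=> hp ha hab; apply: (ge0_ler_powR hp); rewrite ?nnegrE //.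
exact: le_trans hab.
Qed.

Lemma powR_invK p a : p != 0 -> 0 <= a -> (a `^ p^-1) `^ p = a.
Proof. by move=> hp ha; rewrite -powRrM mulVf ?powRr1. Qed.

Lemma powRK p a : p != 0 -> 0 <= a -> (a `^ p) `^ p^-1 = a.
Proof. by move=> hp ha; rewrite -powRrM mulfV ?powRr1. Qed.

Lemma powR_inv_le p a t : 0 < p -> 0 <= a -> 0 <= t ->
  (a `^ p^-1 <= t) = (a <= t `^ p).
Proof.
move=> hp0 ha ht; apply/idP/idP => h.
  by rewrite -(powR_invK (lt0r_neq0 hp0) ha); apply: ge0_powR_le h; rewrite ?powR_ge0 ?ltW.
by rewrite -(powRK (lt0r_neq0 hp0) ht); apply: ge0_powR_le h; rewrite // invr_ge0 ltW.
Qed.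

(* Avoids Minkowski: we only need the triangle inequality up to a constant. *)
Lemma powRD_le p a b : 0 <= p -> 0 <= a -> 0 <= b ->
  (a + b) `^ p <= 2 `^ p * (a `^ p + b `^ p).
Proof.
move=> hp ha hb.
wlog hab : a b ha hb / a <= b.
  move=> W; case: (leP a b) => h; first exact: W.
  by rewrite addrC [a `^ p + _]addrC; apply: W => //; exact: ltW.
apply: (@le_trans _ _ ((2 * b) `^ p)).
  by apply: ge0_powR_le => //; [exact: addr_ge0 | lra].
rewrite powRM //; apply: ler_wpM2l; first exact: powR_ge0.
by rewrite lerDr powR_ge0.
Qed.

End PowR.

Lemma ge1_finite_or_pinfty (R : realType) (q : \bar R) : (1%:E <= q)%E ->
  (exists2 p, 1 <= p & q = p%:E) \/ q = +oo%E.
Proof.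
case: q => [p| |] //=; last by right.
by rewrite lee_fin => h; left; exists p.
Qed.

Section FinLqNorm.
Variables (R : realType) (q : \bar R).
Hypothesis q_ge1 : (1%:E <= q)%E.
Variable d : nat.
Implicit Types (x y z : nat -> R) (p t : R).

Definition powR_sum p x := \sum_(i < d) `|x i| `^ p.

Definition fin_lq_norm x : R :=
  match q with
  | EFin p => powR_sum p x `^ p^-1
  | _ => \big[Num.max/0]_(i < d) `|x i|
  end.

Lemma powR_sum_ge0 p x : 0 <= powR_sum p x.
Proof. by apply: sumr_ge0 => i _; exact: powR_ge0. Qed.

Lemma fin_lq_norm_ge0 x : 0 <= fin_lq_norm x.
Proof.
rewrite /fin_lq_norm; case: q => [p| |]; first exact: powR_ge0;
  by apply: (big_ind (fun v => 0 <= v)) => // a b ha hb; rewrite le_max ha.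
Qed.

Lemma fin_lq_normE p x : q = p%:E -> fin_lq_norm x = powR_sum p x `^ p^-1.
Proof. by rewrite /fin_lq_norm => ->. Qed.

Lemma fin_lq_norm_le_pinfty x t : q = +oo%E -> 0 <= t ->
  (forall i, (i < d)%N -> `|x i| <= t) -> fin_lq_norm x <= t.
Proof. by rewrite /fin_lq_norm => -> ht h; apply: bigmax_le => // i _; exact: h. Qed.

Lemma fin_lq_norm_le_powR p x t : q = p%:E -> 1 <= p -> 0 <= t ->
  (fin_lq_norm x <= t) = (powR_sum p x <= t `^ p).
Proof.
move=> hq hp ht.
by rewrite (fin_lq_normE _ hq) powR_inv_le ?powR_sum_ge0 // (lt_le_trans ltr01 hp).
Qed.

Lemma coord_le_fin_lq_norm x i : (i < d)%N -> `|x i| <= fin_lq_norm x.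
Proof.
move=> hi; case: (ge1_finite_or_pinfty q_ge1) => [[p hp hq]|hq].
  rewrite (fin_lq_normE _ hq) -(powRK (lt0r_neq0 (lt_le_trans ltr01 hp)) (normr_ge0 (x i))).
  apply: ge0_powR_le; rewrite ?invr_ge0 ?powR_ge0 //; first exact: le_trans hp.
  rewrite /powR_sum (bigD1 (Ordinal hi)) //= lerDl.
  by apply: sumr_ge0 => j _; exact: powR_ge0.
rewrite /fin_lq_norm hq.
exact: (le_bigmax 0 (fun j : 'I_d => `|x j|) (Ordinal hi)).
Qed.

Lemma fin_lq_norm_le_homo x y c : 0 <= c ->
  (forall i, (i < d)%N -> `|y i| <= c * `|x i|) ->
  fin_lq_norm y <= c * fin_lq_norm x.
Proof.
move=> hc h; have hcx : 0 <= c * fin_lq_norm x by rewrite mulr_ge0 ?fin_lq_norm_ge0.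
case: (ge1_finite_or_pinfty q_ge1) => [[p hp hq]|hq].
  have hp0 : 0 <= p by apply: le_trans hp.
  rewrite (fin_lq_norm_le_powR _ hq) // powRM ?fin_lq_norm_ge0 //.
  rewrite (fin_lq_normE _ hq) powR_invK ?powR_sum_ge0 ?lt0r_neq0 ?(lt_le_trans ltr01 hp) //.
  rewrite /powR_sum mulr_sumr; apply: ler_sum => i _.
  by rewrite -powRM //; apply: ge0_powR_le => //; exact: h.
apply: fin_lq_norm_le_pinfty => // i hi; apply: le_trans (h i hi) _.
by apply: ler_wpM2l => //; exact: coord_le_fin_lq_norm.
Qed.

Lemma fin_lq_norm_le_mono x y : (forall i, (i < d)%N -> `|x i| <= `|y i|) ->
  fin_lq_norm x <= fin_lq_norm y.
Proof.
move=> h; rewrite -[leRHS]mul1r; apply: fin_lq_norm_le_homo => // i hi.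
by rewrite mul1r; exact: h.
Qed.

Lemma fin_lq_norm_le_box x t : 0 <= t ->
  (forall i, (i < d)%N -> `|x i| <= t) -> fin_lq_norm x <= d%:R * t.
Proof.
move=> ht h; case: (ge1_finite_or_pinfty q_ge1) => [[p hp hq]|hq].
  have hp0 : 0 <= p by apply: le_trans hp.
  rewrite (fin_lq_norm_le_powR _ hq) ?mulr_ge0 //.
  apply: (@le_trans _ _ (\sum_(i < d) t `^ p)).
    by apply: ler_sum => i _; apply: ge0_powR_le => //; exact: h.
  rewrite sumr_const card_ord powRM // -[t `^ p *+ d]mulr_natl.
  apply: ler_wpM2r; first exact: powR_ge0.
  case: (posnP d) => [->|hd]; first exact: powR_ge0.
  by apply: le1r_powR => //; rewrite ler1n.
apply: fin_lq_norm_le_pinfty; rewrite ?mulr_ge0 // => i hi.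
apply: le_trans (h i hi) _; rewrite -[leLHS]mul1r; apply: ler_wpM2r => //.
by rewrite ler1n; exact: leq_ltn_trans hi.
Qed.

Lemma fin_lq_norm_le_sum x y z :
  (forall i, (i < d)%N -> `|z i| <= `|x i| + `|y i|) ->
  fin_lq_norm z <= 4 * Num.max (fin_lq_norm x) (fin_lq_norm y).
Proof.
move=> h; set m := Num.max _ _.
have hm0 : 0 <= m by rewrite le_max fin_lq_norm_ge0.
have hxm : fin_lq_norm x <= m by rewrite le_max lexx.
have hym : fin_lq_norm y <= m by rewrite le_max lexx orbT.
case: (ge1_finite_or_pinfty q_ge1) => [[p hp hq]|hq].
  have hp0 : 0 <= p by apply: le_trans hp.
  move: hxm hym; rewrite !(fin_lq_norm_le_powR _ hq) ?mulr_ge0 // => hxm hym.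
  apply: (@le_trans _ _ (2 `^ p * (powR_sum p x + powR_sum p y))).
    rewrite /powR_sum -big_split /= mulr_sumr; apply: ler_sum => i _.
    apply: le_trans (powRD_le hp0 (normr_ge0 _) (normr_ge0 _)).
    by apply: ge0_powR_le => //; exact: h.
  apply: (@le_trans _ _ (2 `^ p * (2 * m `^ p))).
    by apply: ler_wpM2l; [exact: powR_ge0 | lra].
  rewrite (_ : 4 = 2 * 2) ?mulrA; last lra.
  rewrite !powRM // ?mulr_ge0 //; apply: ler_wpM2r; first exact: powR_ge0.
  apply: ler_wpM2l; first exact: powR_ge0.
  by apply: le1r_powR; rewrite ?ler1n.
apply: fin_lq_norm_le_pinfty; rewrite ?mulr_ge0 // => i hi.
apply: le_trans (h i hi) _.
have := le_trans (coord_le_fin_lq_norm x hi) hxm.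
have := le_trans (coord_le_fin_lq_norm y hi) hym.
lra.
Qed.

Lemma sum_ord_supported (F : nat -> R) N : (forall i, (d <= i)%N -> F i = 0) ->
  (forall i, 0 <= F i) -> \sum_(i < N) F i <= \sum_(i < d) F i.
Proof.
move=> h0 hge; rewrite -!(big_mkord xpredT).
case: (leqP N d) => hN.
  by rewrite (big_cat_nat (leq0n N) hN) /= lerDl sumr_ge0.
rewrite (big_cat_nat (leq0n d) (ltnW hN)) /= [X in _ + X <= _]big_nat_cond.
rewrite [X in _ + X <= _]big1 ?addr0 //.
by move=> i /andP[/andP[hi _] _]; apply: h0.
Qed.

Lemma lq_norm_supported x : (forall i, (d <= i)%N -> x i = 0) ->
  lq_norm q x = (fin_lq_norm x)%:E.
Proof.
move=> h0; case: (ge1_finite_or_pinfty q_ge1) => [[p hp hq]|hq].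
  have hp0 : 0 <= p by apply: le_trans hp.
  rewrite /lq_norm (fin_lq_normE _ hq) hq; apply/eqP; rewrite eq_le; apply/andP; split.
    apply: ge_ereal_sup => _ [N _ <-]; rewrite lee_fin.
    apply: ge0_powR_le; rewrite ?invr_ge0 //; first by apply: sumr_ge0 => i _; exact: powR_ge0.
    apply: (sum_ord_supported (F := fun i => `|x i| `^ p)) => [i hi|i].
      by rewrite h0 // normr0 powR0 // gt_eqF // (lt_le_trans ltr01 hp).
    exact: powR_ge0.
  by apply: ereal_sup_ubound; exists d.
rewrite /lq_norm hq; apply/eqP; rewrite eq_le; apply/andP; split.
  apply: ge_ereal_sup => _ [i _ <-]; rewrite lee_fin.
  case: (ltnP i d) => hi; first exact: coord_le_fin_lq_norm.
  by rewrite h0 // normr0 fin_lq_norm_ge0.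
have hS i : ((`|x i|)%:E <= ereal_sup (range (fun i => (`|x i|)%:E)))%E.
  by apply: ereal_sup_ubound; exists i.
rewrite /fin_lq_norm hq; apply: (big_ind (fun v => (v%:E <= _)%E)) => //.
- by have := hS d; rewrite h0 // normr0.
- by move=> a b ha hb; rewrite /Num.max; case: ifP.
Qed.

End FinLqNorm.

Lemma card_le_sum_cover (T : finType) (U : eqType) (S : {set T}) (s : seq U)
  (B : U -> {set T}) :
  (forall v, v \in S -> exists2 x, x \in s & v \in B x) ->
  (#|S| <= \sum_(x <- s) #|B x|)%N.
Proof.
elim: s S => [|x s IH] S h.
  rewrite big_nil leqn0 cards_eq0; apply/eqP/setP => v; rewrite inE.
  by apply/negP => /h [y]; rewrite in_nil.
rewrite big_cons -(cardsID (B x) S); apply: leq_add.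
  by apply: subset_leq_card; apply: subsetIr.
apply: IH => v; rewrite inE => /andP[hv hvS].
case: (h v hvS) => y; rewrite inE => /orP[/eqP ->|hy] hvy; last by exists y.
by rewrite hvy in hv.
Qed.

Lemma eq_mulnD_small (k a b a' b' : nat) : (b < k)%N -> (b' < k)%N ->
  (a * k + b = a' * k + b')%N -> a = a' /\ b = b'.
Proof.
move=> hb hb' e; have hk : (0 < k)%N by apply: leq_ltn_trans hb.
have e1 := congr1 (fun m => m %/ k)%N e.
rewrite /= !divnMDl // !divn_small // !addn0 in e1.
by split => //; move: e; rewrite e1 => /eqP; rewrite eqn_add2l => /eqP.
Qed.

Section OrdExt.
Variables (R : nmodType) (d : nat).

Definition ord_ext (f : 'I_d -> R) : nat -> R :=
  fun i => oapp f 0 (insub i : option 'I_d).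

Lemma ord_ext_lt f i (hi : (i < d)%N) : ord_ext f i = f (Ordinal hi).
Proof. by rewrite /ord_ext insubT. Qed.

Lemma ord_ext_ord f (j : 'I_d) : ord_ext f j = f j.
Proof. by rewrite (ord_ext_lt _ (ltn_ord j)); congr f; apply: val_inj. Qed.

Lemma ord_ext_ge f i : (d <= i)%N -> ord_ext f i = 0.
Proof. by move=> hi; rewrite /ord_ext insubF // ltnNge hi. Qed.

End OrdExt.

Section Lattice.
Variables (R : realType) (q : \bar R).
Hypothesis q_ge1 : (1%:E <= q)%E.
Variables (d n : nat) (del : R).
Hypothesis del_gt0 : 0 < del.

Local Notation fnorm := (fin_lq_norm q d).

Definition lattice_pt (v : {ffun 'I_d -> 'I_n.+1}) : nat -> R :=
  ord_ext (fun j => del * (v j : nat)%:R).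

Definition lattice_ball (t : R) : {set {ffun 'I_d -> 'I_n.+1}} :=
  [set v | fnorm (lattice_pt v) <= t].

Lemma lattice_pt_supported v i : (d <= i)%N -> lattice_pt v i = 0.
Proof. exact: ord_ext_ge. Qed.

Lemma lattice_ball_coord t v (j : 'I_d) : v \in lattice_ball t -> del * (v j : nat)%:R <= t.
Proof.
rewrite inE; apply: le_trans.
have := coord_le_fin_lq_norm q_ge1 (lattice_pt v) (ltn_ord j).
by rewrite /lattice_pt ord_ext_ord ger0_norm // mulr_ge0 // ltW.
Qed.

Lemma lattice_ball0 t : 0 <= t -> [ffun => ord0] \in lattice_ball t.
Proof.
move=> ht; rewrite inE; apply: le_trans ht.
rewrite -[leRHS](mulr0 d%:R); apply: fin_lq_norm_le_box => // i hi.
by rewrite /lattice_pt (ord_ext_lt _ hi) ffunE mulr0 normr0.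
Qed.

Section Dilate.
Variables (k : nat) (t : R).
Hypothesis n_large : k%:R * (t / del + 1) <= n%:R.

Definition lattice_dilate (vw : {ffun 'I_d -> 'I_n.+1} * {ffun 'I_d -> 'I_k}) :
    {ffun 'I_d -> 'I_n.+1} :=
  [ffun j => inord (vw.1 j * k + vw.2 j)].

Lemma lattice_dilate_small v (w : {ffun 'I_d -> 'I_k}) j :
  v \in lattice_ball t -> (v j * k + w j < n.+1)%N.
Proof.
move=> /(lattice_ball_coord j) hvj.
have hv : ((v j : nat)%:R : R) <= t / del by rewrite ler_pdivlMr // mulrC.
have hw : ((w j : nat)%:R : R) + 1 <= k%:R by rewrite natr1 ler_nat ltn_ord.
have hvk : ((v j : nat)%:R : R) * k%:R <= t / del * k%:R by apply: ler_wpM2r.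
rewrite -(ltr_nat R) natrD natrM.
move: n_large; rewrite mulrDr mulr1 [_ * (t / del)]mulrC.
lra.
Qed.

Lemma lattice_dilate_inj :
  {in finset.setX (lattice_ball t) [set: {ffun 'I_d -> 'I_k}] &, injective lattice_dilate}.
Proof.
move=> [v w] [v' w']; rewrite !finset.in_setX !finset.in_setT /= !andbT => hv hv' /ffunP e.
have vw_eq j : v j = v' j /\ w j = w' j.
  have := e j; rewrite !ffunE => /(congr1 val) /=.
  rewrite !inordK ?lattice_dilate_small //.
  move=> /(eq_mulnD_small (ltn_ord _) (ltn_ord _)) [e1 e2].
  by split; apply: val_inj.
by congr pair; apply/ffunP => j; case: (vw_eq j).
Qed.

Lemma lattice_dilate_sub : d%:R * del <= t ->
  lattice_dilate @: finset.setX (lattice_ball t) [set: {ffun 'I_d -> 'I_k}]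
    \subset lattice_ball (4 * (k%:R * t)).
Proof.
move=> hdt; apply/fintype.subsetP => y /finset.imsetP[[v w]].
rewrite finset.in_setX finset.in_setT andbT /= => hv ->.
rewrite inE; apply: le_trans (fin_lq_norm_le_sum q_ge1
  (x := fun i => k%:R * lattice_pt v i) (y := ord_ext (fun j => del * (w j : nat)%:R)) _) _.
  move=> i hi; rewrite /lattice_pt !(ord_ext_lt _ hi) ffunE inordK ?lattice_dilate_small //.
  rewrite natrD natrM mulrDr mulrA [k%:R * _]mulrC; exact: ler_normD.
apply: ler_wpM2l => //; rewrite ge_max; apply/andP; split.
  apply: le_trans (fin_lq_norm_le_homo q_ge1 (x := lattice_pt v) (ler0n _ k) _) _.
    by move=> i hi; rewrite normrM normr_nat.
  by apply: ler_wpM2l => //; rewrite inE in hv.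
apply: le_trans (fin_lq_norm_le_box q_ge1 (t := del * k%:R) _ _) _.
- by rewrite mulr_ge0 // ltW.
- move=> i hi; rewrite (ord_ext_lt _ hi) normrM gtr0_norm // normr_nat.
  by apply: ler_wpM2l; [exact: ltW | rewrite ler_nat ltnW].
by rewrite mulrA [k%:R * t]mulrC; apply: ler_wpM2r.
Qed.

Lemma card_lattice_ball_dilate : d%:R * del <= t ->
  (#|lattice_ball t| * k ^ d <= #|lattice_ball (4 * (k%:R * t))|)%N.
Proof.
move=> hdt; have := subset_leq_card (lattice_dilate_sub hdt).
by rewrite (card_in_imset lattice_dilate_inj) cardsX cardsT card_ffun !card_ord.
Qed.

End Dilate.

Lemma del_distn (a b : nat) : del * (`|a - b|%N)%:R = `|del * a%:R - del * b%:R|.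
Proof. by rewrite -mulrBr normrM gtr0_norm // natr_absz intr_norm intrB. Qed.

(* Within [eps] of a point, [v |-> (|v - v0|, sign (v - v0))] injects the
   lattice points into [lattice_ball (4 eps) * bool^d]. *)
Lemma card_lattice_near (S : {set {ffun 'I_d -> 'I_n.+1}}) (x : nat -> R) (eps : R) :
  (#|[set v in S | (fnorm (lattice_pt v - x) <= eps)%R]| <= #|lattice_ball (4 * eps)| * 2 ^ d)%N.
Proof.
set A := [set v in S | _].
have [->|/set0Pn[v0 hv0]] := eqVneq A finset.set0; first by rewrite cards0.
pose g (v : {ffun 'I_d -> 'I_n.+1}) :=
  ([ffun j => inord `|v j - v0 j|%N : 'I_n.+1], [ffun j => (v0 j <= v j)%N]).
have distn_small (a b : 'I_n.+1) : (`|a - b|%N < n.+1)%N.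
  by have := ltn_ord a; have := ltn_ord b; lia.
have g_inj : {in A &, injective g}.
  move=> v v' _ _ [/ffunP e1 /ffunP e2]; apply/ffunP => j; apply: val_inj.
  have := e1 j; have := e2 j; rewrite !ffunE => /= e2j /(congr1 val).
  rewrite /= !inordK ?distn_small //; lia.
have g_sub : g @: A \subset finset.setX (lattice_ball (4 * eps)) [set: {ffun 'I_d -> bool}].
  apply/fintype.subsetP => y /finset.imsetP[v hv ->]; rewrite !inE andbT.
  move: hv0 hv; rewrite !inE => /andP[_ hv0] /andP[_ hv].
  apply: le_trans (fin_lq_norm_le_sum q_ge1 (x := lattice_pt v - x)
     (y := - (lattice_pt v0 - x)) _) _.
    move=> i hi; rewrite /lattice_pt !fctE !(ord_ext_lt _ hi) ffunE.
    rewrite inordK ?distn_small // del_distn normr_id.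
    set a := del * _; set b := del * _.
    by rewrite (_ : a - b = (a - x i) + - (b - x i)) ?ler_normD // opprB addrA subrK.
  apply: ler_wpM2l => //; rewrite ge_max hv /=.
  by apply: le_trans hv0; apply: fin_lq_norm_le_mono => // i _; rewrite !fctE normrN.
rewrite -(card_in_imset g_inj); apply: (leq_trans (subset_leq_card g_sub)).
by rewrite cardsX cardsT card_ffun card_bool card_ord.
Qed.

Lemma card_lattice_ball_le_covering (r eps : R) (X : set (nat -> R)) :
  covering q (ball_fin q d r) X eps ->
  (#|lattice_ball r| <= #|` fset_set X| * (#|lattice_ball (4 * eps)| * 2 ^ d))%N.
Proof.
move=> [finX XA cov].
apply: leq_trans (card_le_sum_cover (s := fset_set X)
  (B := fun x => [set v in lattice_ball r | (fnorm (lattice_pt v - x) <= eps)%R]) _) _.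
  move=> v hv.
  have hball : ball_fin q d r (lattice_pt v).
    split; last exact: lattice_pt_supported.
    by rewrite (lq_norm_supported q_ge1 (lattice_pt_supported v)) lee_fin; rewrite inE in hv.
  have [x Xx hx] := cov _ hball.
  exists x; first by rewrite in_fset_set // inE.
  rewrite inE hv -lee_fin -(lq_norm_supported q_ge1) //.
  have [_ x_supp] := XA _ Xx.
  by move=> i hi; rewrite !fctE lattice_pt_supported ?x_supp // subr0.
rewrite card_fset_sum1 big_distrl /=; apply: leq_sum => x _; rewrite mul1n.
exact: card_lattice_near.
Qed.

End Lattice.

Section Log2.
Variable R : realType.
Implicit Types x y a : R.

Lemma ln2_gt0 : 0 < ln (2 : R).
Proof. by apply: ln_gt0; lra. Qed.

Lemma log2_ge0 x : 1 <= x -> 0 <= log2 x.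
Proof. by move=> hx; apply: divr_ge0; [exact: ln_ge0 | exact: ltW ln2_gt0]. Qed.

Lemma log2_le x y : 0 < x -> x <= y -> log2 x <= log2 y.
Proof.
move=> hx hxy; rewrite /log2 ler_pM2r ?invr_gt0 ?ln2_gt0 //.
by rewrite ler_ln ?posrE //; apply: lt_le_trans hxy.
Qed.

Lemma log2M x y : 0 < x -> 0 < y -> log2 (x * y) = log2 x + log2 y.
Proof. by move=> hx hy; rewrite /log2 lnM ?posrE // mulrDl. Qed.

Lemma log2_powR x a : 0 < x -> log2 (x `^ a) = a * log2 x.
Proof. by move=> hx; rewrite /log2 ln_powR mulrA. Qed.

Lemma log2X x (n : nat) : 0 < x -> log2 (x ^+ n) = n%:R * log2 x.
Proof. by move=> hx; rewrite -powR_mulrn ?log2_powR // ltW. Qed.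

Lemma log2_2 : log2 (2 : R) = 1.
Proof. by rewrite /log2 divff // gt_eqF // ln2_gt0. Qed.

Lemma log2_4 : log2 (4 : R) = 2.
Proof. by rewrite (_ : 4 = 2 ^+ 2) ?log2X ?log2_2 ?mulr1 //; lra. Qed.

(* From [ln y <= y] at [y = x ^ (h / 2)]. *)
Lemma log2_le_powR x h : 0 < h -> 1 <= x ->
  log2 x <= (2 / (h * ln 2)) * x `^ (h / 2).
Proof.
move=> hh hx; set P := x `^ (h / 2).
have hP0 : 0 < P by apply: powR_gt0; lra.
have hlnP : ln P <= P.
  by have := @le_ln1Dx R (P - 1) ltac:(lra); rewrite addrC subrK; lra.
have hl0 : ln (2 : R) != 0 by rewrite gt_eqF // ln2_gt0.
have -> : log2 x = (2 / h) * ln P / ln 2.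
  by rewrite /log2 /P ln_powR; field; rewrite hl0 gt_eqF.
have -> : 2 / (h * ln 2) * P = (2 / h) * P / ln 2.
  by field; rewrite hl0 gt_eqF.
by rewrite ler_pM2r ?invr_gt0 ?ln2_gt0 // ler_pM2l ?divr_gt0.
Qed.

End Log2.

Section CoveringLowerBound.
Variables (R : realType) (q : \bar R).
Hypothesis q_ge1 : (1%:E <= q)%E.
Variables (d : nat) (r eps : R) (X : set (nat -> R)).
Hypothesis eps_gt0 : 0 < eps.
Hypothesis X_cover : covering q (ball_fin q d r) X eps.

Lemma covering_card_ge_expn (k : nat) : 16 * k%:R * eps <= r ->
  (k ^ d <= #|` fset_set X| * 2 ^ d)%N.
Proof.
move=> hkr; set N := #|` fset_set X|.
pose del := 4 * eps / (d%:R + 1).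
have hd1 : 0 < d%:R + 1 :> R by rewrite ltr_wpDl.
have del_gt0 : 0 < del by rewrite divr_gt0 // mulr_gt0.
have hdd : d%:R * del <= 4 * eps.
  by rewrite /del mulrA ler_pdivrMr // mulrC ler_wpM2l ?lerDl // mulr_ge0 // ltW.
pose n := (Num.truncn (k%:R * (4 * eps / del + 1))).+1.
have hn : k%:R * (4 * eps / del + 1) <= n%:R by exact/ltW/truncnS_gt.
have dilate := card_lattice_ball_dilate q_ge1 del_gt0 hn hdd.
have sub_r :
    lattice_ball q d n del (4 * (k%:R * (4 * eps))) \subset lattice_ball q d n del r.
  apply/fintype.subsetP => v; rewrite !inE => hv; apply: le_trans hv _; lra.
have cover := card_lattice_ball_le_covering q_ge1 n del_gt0 X_cover.
have c_gt0 : (0 < #|lattice_ball q d n del (4 * eps)|)%N.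
  rewrite card_gt0; apply/finset.set0Pn; exists [ffun => ord0].
  by rewrite lattice_ball0 // mulr_ge0 // ltW.
have := leq_trans dilate (leq_trans (subset_leq_card sub_r) cover).
by rewrite mulnCA leq_pmul2l.
Qed.

Lemma covering_card_ge : 1 <= r -> 80 * eps <= 1 -> (2 * r) ^+ d <= (#|` fset_set X|)%:R.
Proof.
move=> r_ge1 heps; set N := #|` fset_set X|.
pose k := (Num.truncn (4 * r)).+1.
have hk1 : 4 * r < k%:R := truncnS_gt _.
have hk2 : k%:R <= 4 * r + 1 by rewrite /k -natr1 lerD2r truncn_le; lra.
have hkr : 16 * k%:R * eps <= r.
  have : k%:R * eps <= (4 * r + 1) * eps by apply: ler_wpM2r => //; exact: ltW.
  have : 4 * r * eps <= 4 * r * (1 / 80) by apply: ler_wpM2l; lra.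
  lra.
have hkN : (k%:R ^+ d : R) <= N%:R * 2 ^+ d.
  by rewrite -!natrX -natrM ler_nat covering_card_ge_expn.
rewrite -(@ler_pM2r _ (2 ^+ d)) ?exprn_gt0 // -exprMn.
by apply: le_trans hkN; apply: lerXn2r; rewrite ?nnegrE //; lra.
Qed.

Lemma covering_log2_card_ge : 1 <= r -> 80 * eps <= 1 ->
  d%:R * (log2 r + 1) <= log2 (#|` fset_set X|)%:R.
Proof.
move=> r_ge1 heps; have r_gt0 : 0 < r := lt_le_trans ltr01 r_ge1.
have -> : d%:R * (log2 r + 1) = log2 ((2 * r) ^+ d).
  by rewrite log2X ?mulr_gt0 // log2M // log2_2 addrC.
by apply: log2_le; rewrite ?exprn_gt0 ?mulr_gt0 // covering_card_ge.
Qed.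

End CoveringLowerBound.

Lemma card_fset_set_seq (R : realType) (s : seq (nat -> R)) :
  (#|` fset_set [set` s]%classic| <= size s)%N.
Proof.
have -> : [set` s]%classic = [set` [fset x in s]%fset]%classic.
  by apply/funext => x /=; rewrite inE.
by rewrite set_fsetK card_fseq size_undup.
Qed.

Section Grid.
Variables (R : realType) (q : \bar R).
Hypothesis q_ge1 : (1%:E <= q)%E.
Variables (d : nat) (r del : R).
Hypothesis del_gt0 : 0 < del.

Local Notation K := (Num.truncn (r / del)).

Definition grid_pt (w : {ffun 'I_d -> bool * 'I_K.+1}) : nat -> R :=
  ord_ext (fun j => (if (w j).1 then -1 else 1) * (del * ((w j).2 : nat)%:R)).

Lemma exists_grid_pt_near a : ball_fin q d r a ->
  exists w, ball_fin q d r (grid_pt w) /\ (lq_dist q a (grid_pt w) <= (d%:R * del)%:E)%E.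
Proof.
move=> [ha a_supp]; have hna : fin_lq_norm q d a <= r.
  by move: ha; rewrite (lq_norm_supported q_ge1 a_supp) lee_fin.
pose t i := Num.truncn (`|a i| / del).
have t_small i : (i < d)%N -> (t i < K.+1)%N.
  move=> hi; rewrite ltnS; apply: le_truncn; rewrite ler_pM2r ?invr_gt0 //.
  exact: le_trans (coord_le_fin_lq_norm q_ge1 a hi) hna.
have t_le i : del * (t i)%:R <= `|a i|.
  by rewrite mulrC -ler_pdivlMr // truncn_le divr_ge0 // ltW.
have t_gt i : `|a i| < del * (t i)%:R + del.
  have := truncnS_gt (`|a i| / del); rewrite ltr_pdivrMr //.
  by rewrite -natr1 mulrDl mul1r mulrC.
pose w := [ffun j : 'I_d => ((a j < 0)%R, inord (t j) : 'I_K.+1)].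
have wE i (hi : (i < d)%N) :
    grid_pt w i = (if (a i < 0)%R then -1 else 1) * (del * (t i)%:R).
  by rewrite /grid_pt (ord_ext_lt _ hi) ffunE /= inordK ?t_small.
have w_supp i : (d <= i)%N -> grid_pt w i = 0 by apply: ord_ext_ge.
exists w; split.
  split => //; rewrite (lq_norm_supported q_ge1 w_supp) lee_fin.
  apply: le_trans hna; apply: fin_lq_norm_le_mono => // i hi.
  rewrite (wE i hi) normrM; case: ifP => _;
    by rewrite ?normrN normr1 mul1r ger0_norm ?t_le // mulr_ge0 // ltW.
rewrite /lq_dist (lq_norm_supported (d := d) q_ge1) => [|i hi]; last first.
  by rewrite !fctE a_supp ?w_supp ?subr0.
rewrite lee_fin; apply: (fin_lq_norm_le_box q_ge1); first exact: ltW del_gt0.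
move=> i hi.
have h1 := t_le i; have h2 := t_gt i; rewrite !fctE (wE i hi).
case: ifP => a_neg.
  by rewrite mulN1r opprK ler_norml; rewrite ltr0_norm // in h1 h2; lra.
by rewrite mul1r ler_norml; rewrite ger0_norm ?leNgt ?a_neg // in h1 h2; lra.
Qed.

Lemma exists_grid_covering (eps : R) : d%:R * del <= eps ->
  exists X, covering q (ball_fin q d r) X eps /\ (#|` fset_set X| <= (2 * K.+1) ^ d)%N.
Proof.
move=> hdd.
pose s := [seq grid_pt w | w <- enum {ffun 'I_d -> bool * 'I_K.+1} & `[< ball_fin q d r (grid_pt w) >]].
exists [set` s]%classic; split; first split.
- exact: finite_seq.
- by move=> y /= /mapP[w]; rewrite mem_filter => /andP[/asboolP h _] ->.
- move=> a /exists_grid_pt_near[w [hw hdist]]; exists (grid_pt w).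
    by apply/mapP; exists w => //; rewrite mem_filter mem_enum andbT; apply/asboolP.
  by apply: le_trans hdist _; rewrite lee_fin.
apply: leq_trans (card_fset_set_seq s) _.
rewrite size_map size_filter; apply: leq_trans (count_size _ _) _.
by rewrite -cardT card_ffun card_prod card_bool !card_ord.
Qed.

End Grid.

Lemma exists_covering_log2_card_le (R : realType) (q : \bar R) (d : nat) (r eps : R) :
  (1%:E <= q)%E -> 1 <= r -> 0 < eps -> eps <= 1 ->
  exists X, covering q (ball_fin q d r) X eps /\
    log2 (#|` fset_set X|)%:R <= d%:R * log2 (4 * r * (d%:R + 1) / eps).
Proof.
move=> q_ge1 r_ge1 eps_gt0 eps_le1.
pose del := eps / (d%:R + 1).
have hd1 : 0 < d%:R + 1 :> R by rewrite ltr_wpDl.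
have del_gt0 : 0 < del by rewrite /del divr_gt0.
have hdd : d%:R * del <= eps.
  by rewrite /del mulrA ler_pdivrMr // mulrC ler_wpM2l ?lerDl //; lra.
have [X [cov cardX]] := exists_grid_covering q_ge1 r del_gt0 hdd.
exists X; split => //.
set K := Num.truncn (r / del) in cardX.
have r_del_ge1 : 1 <= r / del.
  rewrite /del invf_div mulrA ler_pdivlMr // mul1r.
  by apply: (@le_trans _ _ (1 * 1)); [lra | apply: ler_pM; rewrite ?lerDr //; lra].
have hK : (K%:R : R) <= r / del by rewrite /K truncn_le; lra.
have -> : 4 * r * (d%:R + 1) / eps = 4 * (r / del) by rewrite /del invf_div !mulrA.
case: (posnP #|` fset_set X|) => [->|N_gt0].
  by rewrite /log2 ln0 // mul0r mulr_ge0 // log2_ge0 //; lra.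
apply: (@le_trans _ _ (log2 ((2 * K.+1)%:R ^+ d))).
  by apply: log2_le; rewrite ?ltr0n // -natrX ler_nat.
rewrite log2X ?ltr0n // ler_wpM2l // log2_le ?ltr0n // natrM -natr1; lra.
Qed.

Section Asymptotics.
Variable R : realType.

Definition almost_linear (f : nat -> R) : Prop :=
  forall h : R, 0 < h ->
    exists (C : R) (M0 : nat), forall M : nat, (M0 <= M)%N -> f M <= C * M%:R `^ (1 + h).

Lemma powR_ge1 (x a : R) : 1 <= x -> 0 <= a -> 1 <= x `^ a.
Proof. by move=> hx ha; rewrite -[leLHS](powRr0 x); exact: ler_powR. Qed.

Lemma le_powR_eventually_all (f : nat -> R) (c a : R) (M0 : nat) : 0 <= a ->
  (forall M, (M0 <= M)%N -> f M <= c * M%:R `^ a) ->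
  exists c', 0 < c' /\ forall M, (1 <= M)%N -> f M <= c' * M%:R `^ a.
Proof.
move=> ha hf; set S := \sum_(i < M0) `|f i|.
have S_ge0 : 0 <= S by apply: sumr_ge0.
exists (`|c| + S + 1); split => [|M hM]; first by have := normr_ge0 c; lra.
have hMa : 1 <= M%:R `^ a by apply: powR_ge1; rewrite ?ler1n.
case: (leqP M0 M) => hM0.
  apply: le_trans (hf M hM0) _; apply: ler_wpM2r; first lra.
  by have := ler_norm c; lra.
have hfS : f M <= S.
  rewrite /S (bigD1 (Ordinal hM0)) //=; apply: le_trans (ler_norm _) _.
  by rewrite lerDl sumr_ge0.
apply: (le_trans hfS); rewrite -[leLHS]mulr1.
by apply: ler_pM => //; have := normr_ge0 c; lra.
Qed.

Lemma log2_covering_radius (d M : nat) (r g : R) : 0 < r -> (1 <= M)%N ->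
  log2 (4 * r * (d%:R + 1) / M%:R `^ (- g)) =
  2 + log2 r + log2 (d%:R + 1) + g * log2 M%:R.
Proof.
move=> hr hM; have hM0 : (0 : R) < M%:R by rewrite ltr0n.
have hd1 : 0 < d%:R + 1 :> R by rewrite ltr_wpDl.
by rewrite powRN invrK !log2M ?log2_4 ?log2_powR ?mulr_gt0 ?powR_gt0 //; lra.
Qed.

(* [d (log2 (d + 1) + g log2 x)] costs only a factor [x ^ (h / 2)] more than
   [d (log2 r + 1)], because [d <= C x ^ (1 + h / 2)] and [log2 x] is [O(x ^ (h / 2))]. *)
Lemma covering_bits_le (d : nat) (r x C g h : R) : 1 <= r -> 1 <= x -> 0 <= C ->
  0 <= g -> 0 < h -> d%:R * (log2 r + 1) <= C * x `^ (1 + h / 2) ->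
  d%:R * (2 + log2 r + log2 (d%:R + 1) + g * log2 x) <=
  C * (2 + log2 (C + 1) + (1 + h / 2 + g) * (2 / (h * ln 2))) * x `^ (1 + h).
Proof.
move=> hr hx hC hg hh hdC.
have hQ : 1 <= x `^ (1 + h / 2) by apply: powR_ge1; lra.
have hP : 1 <= x `^ (h / 2) by apply: powR_ge1; lra.
have hK : 0 <= 2 / (h * ln 2) :> R by rewrite divr_ge0 // mulr_ge0 // ltW // ln2_gt0.
have hA : 0 <= log2 (C + 1) by apply: log2_ge0; lra.
have hlr : 0 <= log2 r := log2_ge0 hr.
have hLP := log2_le_powR hh hx.
have QP : x `^ (1 + h) = x `^ (1 + h / 2) * x `^ (h / 2).
  by rewrite -powRD ?(gt_eqF (lt_le_trans ltr01 hx)) ?implybT //; congr (_ `^ _); lra.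
have hdQ : d%:R <= C * x `^ (1 + h / 2).
  by apply: le_trans _ hdC; rewrite ler_peMr //; lra.
have hld : log2 (d%:R + 1) <=
    log2 (C + 1) + (1 + h / 2) * (2 / (h * ln 2) * x `^ (h / 2)).
  apply: (@le_trans _ _ (log2 ((C + 1) * x `^ (1 + h / 2)))).
    by apply: log2_le; [rewrite ltr_wpDl | nra].
  rewrite log2M ?log2_powR ?(lt_le_trans ltr01) //; last lra.
  by rewrite lerD2l ler_wpM2l //; lra.
have hld0 : 0 <= log2 (d%:R + 1 : R) by apply: log2_ge0; rewrite lerDr.
have t_ld := ler_pM (ler0n _ d) hld0 hdQ hld.
have t_L := ler_pM (ler0n _ d) (mulr_ge0 hg (log2_ge0 hx)) hdQ (ler_wpM2l hg hLP).
have t_A : C * x `^ (1 + h / 2) * (2 + log2 (C + 1)) <=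
    C * x `^ (1 + h / 2) * (2 + log2 (C + 1)) * x `^ (h / 2).
  by rewrite ler_peMr // !mulr_ge0 //; lra.
have hdlr : 0 <= d%:R * log2 r by rewrite mulr_ge0.
rewrite QP; nra.
Qed.

End Asymptotics.

Lemma mul_powRN_le1 (R : realType) (c g : R) (M : nat) : 0 < g -> 0 <= c ->
  ((Num.truncn (c `^ g^-1)).+1 <= M)%N -> c * M%:R `^ (- g) <= 1.
Proof.
move=> hg hc hM; have M_gt0 : (0 : R) < M%:R by rewrite ltr0n; exact: leq_trans hM.
rewrite powRN ler_pdivrMr ?powR_gt0 // mul1r.
have hcM : c `^ g^-1 <= M%:R.
  by apply/ltW/(lt_le_trans (truncnS_gt _)); rewrite ler_nat.
rewrite -(powR_invK (lt0r_neq0 hg) hc).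
by apply: ge0_powR_le hcM; rewrite ?powR_ge0 ?ltW.
Qed.

Section BallEncoding.
Variables (R : realType) (q : \bar R) (d : nat -> nat) (r : nat -> R).
Hypothesis q_ge1 : (1%:E <= q)%E.
Hypothesis r_ge1 : forall M, 1 <= r M.

Local Notation Sigma := (fun M => ball_fin q (d M) (r M)).

Lemma almost_linear_of_gamma_encodable (g : R) : 0 < g ->
  gamma_encodable q Sigma g -> almost_linear (fun M => (d M)%:R * (log2 (r M) + 1)).
Proof.
move=> g_gt0 enc h h_gt0.
have [c1 [c2 [c1_gt0 [_ [Enc hEnc]]]]] := enc h h_gt0.
exists c2, (Num.truncn ((80 * c1) `^ g^-1)).+1 => M hM.
have [cov card_le] := hEnc M (leq_trans (ltn0Sn _) hM).
apply: le_trans card_le; apply: (covering_log2_card_ge q_ge1 _ cov (r_ge1 M)).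
  by rewrite mulr_gt0 // powR_gt0 // ltr0n; exact: leq_trans hM.
by rewrite mulrA mul_powRN_le1 // mulr_ge0 // ltW.
Qed.

Lemma infty_encodable_of_almost_linear :
  almost_linear (fun M => (d M)%:R * (log2 (r M) + 1)) -> infty_encodable q Sigma.
Proof.
move=> lin g g_gt0 h h_gt0.
have [C [M0 hC]] := lin (h / 2) (divr_gt0 h_gt0 (ltr0n _ 2)).
pose bits M := (d M)%:R * log2 (4 * r M * ((d M)%:R + 1) / M%:R `^ (- g)).
have bits_le M : (maxn M0 1 <= M)%N ->
    bits M <= Num.max C 0 * (2 + log2 (Num.max C 0 + 1) +
      (1 + h / 2 + g) * (2 / (h * ln 2))) * M%:R `^ (1 + h).
  rewrite geq_max => /andP[hM0 hM1].
  rewrite /bits (log2_covering_radius _ _ (lt_le_trans ltr01 (r_ge1 M)) hM1).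
  apply: (covering_bits_le (r_ge1 M)) => //.
  - by rewrite ler1n.
  - by rewrite le_max lexx orbT.
  - exact: ltW.
  apply: le_trans (hC M hM0) _; apply: ler_wpM2r; first exact: powR_ge0.
  by rewrite le_max lexx.
have [c2 [c2_gt0 hc2]] := le_powR_eventually_all (ltW (addr_gt0 ltr01 h_gt0)) bits_le.
exists 1, c2; split => //; split => //.
have /choice[Enc hEnc] : forall M, exists X, (1 <= M)%N ->
    covering q (Sigma M) X (1 * M%:R `^ (- g)) /\
    log2 (#|` fset_set X|)%:R <= c2 * M%:R `^ (1 + h).
  move=> M; case: (posnP M) => [->|M_gt0]; first by exists set0.
  have eps_gt0 : 0 < M%:R `^ (- g) by apply: powR_gt0; rewrite ltr0n.
  have eps_le1 : M%:R `^ (- g) <= 1.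
    by rewrite powRN invf_le1 ?powR_gt0 ?ltr0n // powR_ge1 ?ler1n // ltW.
  have [X [cov card_le]] :=
    exists_covering_log2_card_le (d M) q_ge1 (r_ge1 M) eps_gt0 eps_le1.
  exists X => _; rewrite mul1r; split => //.
  exact: le_trans card_le (hc2 M M_gt0).
by exists Enc.
Qed.

End BallEncoding.

Local Open Scope classical_set_scope.

Theorem mainTheorem12 (R : realType) (q : \bar R) (d : nat -> nat) (r : nat -> R) :
  (1%:E <= q)%E ->
  (forall M, 1 <= r M) ->
  let Sigma := fun M => ball_fin q (d M) (r M) in
  (infty_encodable q Sigma \/ forall gamma : R, 0 < gamma -> ~ gamma_encodable q Sigma gamma)
  /\
  (infty_encodable q Sigma <->
     forall h : R, 0 < h ->
       exists (C : R) (M0 : nat), forall M : nat, (M0 <= M)%N ->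
         (d M)%:R * (log2 (r M) + 1) <= C * M%:R `^ (1 + h)).
Proof.
move=> q_ge1 r_ge1 Sigma.
have lin_of_enc := almost_linear_of_gamma_encodable q_ge1 r_ge1.
have enc_of_lin := infty_encodable_of_almost_linear q_ge1 r_ge1.
split.
  have [[g [g_gt0 enc]]|none] := pselect (exists g : R, 0 < g /\ gamma_encodable q Sigma g).
    by left; apply: enc_of_lin; exact: lin_of_enc g_gt0 enc.
  by right => g g_gt0 enc; apply: none; exists g.
split=> [inf|]; last exact: enc_of_lin.
exact: lin_of_enc ltr01 (inf 1 ltr01).
Qed.
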